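(* If $(k,\alpha)\in\Upsilon$ and $(w_1,w_2,x,g,t)\in\Gamma(k,\alpha)$, then the right infinite word $w_1w_2xt$ is $\alpha$-power free, i.e. $w_1w_2xt\in L^{\mathbb N,R}_{k,\alpha}$.
   Context: $\Sigma_k$ is an alphabet with $k$ letters. For a nonempty finite word $r$ and a rational $\beta\ge 1$ with $\beta|r|$ an integer, the $\beta$-power $r^\beta$ is the word $rr\cdots rt$ of length $\beta|r|$, where $t$ is a prefix of $r$. For rational $\alpha\ge1$, a word is $\alpha$-power free if it has no factor that is a $\beta$-power with $\beta\ge\alpha$, and $\alpha^+$-power free if it has no factor that is a $\beta$-power with $\beta>\alpha$; ''$\alpha$'' may denote a rational number or a symbol $\alpha^+$. $L_{k,\alpha}$ is the set of finite $\alpha$-power free words over $\Sigma_k$, and $L^{\mathbb N,R}_{k,\alpha}$ the set of right infinite words over $\Sigma_k$ all of whose finite factors lie in $L_{k,\alpha}$. $\Upsilon$ is the set of pairs: $(k,\alpha)$ with $k=3$ and rational $\alpha>2$; $(k,\alpha)$ with $k>3$ and rational $\alpha\ge2$; $(k,\alpha^+)$ with $k\ge3$ and rational $\alpha\ge2$. $\operatorname{occur}(w,s)$ denotes the number of occurrences of a nonempty word $s$ as a factor of $w$. Prefixes of a word include the empty word (and the word itself if finite). For $(k,\alpha)\in\Upsilon$, $(w_1,w_2,x,g,t)\in\Gamma(k,\alpha)$ means: $w_1,w_2,g\in\Sigma_k^*$; $x\in\Sigma_k$; $w_1w_2xg\in L_{k,\alpha}$; $t\in L^{\mathbb N,R}_{k,\alpha}$;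 $\operatorname{occur}(t,x)=0$; $g$ is a prefix of $t$; $\operatorname{occur}(w_2xgy,xgy)=1$, where $y\in\Sigma_k$ is the letter such that $gy$ is a prefix of $t$; and $\operatorname{occur}(w_2,x)\ge\operatorname{occur}(w_1,x)$. *)

From HB Require Import structures.
From mathcomp Require Import all_boot all_order all_algebra.
Set Implicit Arguments. Unset Strict Implicit. Unset Printing Implicit Defensive.
Import Order.TTheory GRing.Theory Num.Theory.

(* Alphabet Sigma_k = 'I_k ; finite words = seq 'I_k ;
   right infinite words = nat -> 'I_k. *)

(* An exponent "alpha" is either a rational alpha (plus = false)
   or the symbol alpha^+ (plus = true). *)

Definition is_beta_power {T : Type} (u : seq T) (beta : rat) : Prop :=
  exists r : seq T,
    [/\ (0 < size r)%N, (1 <= beta)%R,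
        ((size u)%:R = beta * (size r)%:R :> rat)%R
      & u = take (size u) (flatten (nseq (size u) r))].

Definition forbidden_exp (alpha : rat) (plus : bool) (beta : rat) : bool :=
  if plus then (alpha < beta)%R else (alpha <= beta)%R.

Definition power_free {T : eqType} (alpha : rat) (plus : bool) (w : seq T) : Prop :=
  forall (u : seq T) (beta : rat),
    infix u w -> is_beta_power u beta -> ~~ forbidden_exp alpha plus beta.

Definition L_fin (k : nat) (alpha : rat) (plus : bool) (w : seq 'I_k) : Prop :=
  power_free alpha plus w.

Definition inf_factor {T : Type} (t : nat -> T) (m n : nat) : seq T :=
  mkseq (fun i => t (m + i)%N) n.

Definition L_inf (k : nat) (alpha : rat) (plus : bool) (t : nat -> 'I_k) : Prop :=
  forall m n : nat, L_fin alpha plus (inf_factor t m n).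

Definition cat_inf {T : Type} (u : seq T) (t : nat -> T) : nat -> T :=
  fun i => if (i < size u)%N then nth (t 0%N) u i else t (i - size u)%N.

Definition occur {T : eqType} (w s : seq T) : nat :=
  count (fun i => take (size s) (drop i w) == s) (iota 0 (size w - size s).+1) *
  (size s <= size w)%N.

Definition occur_inf_letter_zero {T : eqType} (t : nat -> T) (x : T) : Prop :=
  forall i, t i != x.

Definition inf_prefix {T : Type} (g : seq T) (t : nat -> T) : Prop :=
  g = mkseq t (size g).

Definition Upsilon (k : nat) (alpha : rat) (plus : bool) : Prop :=
  if plus then (3 <= k)%N /\ (2 <= alpha)%R
  else ((k = 3) /\ (2 < alpha)%R) \/ ((3 < k)%N /\ (2 <= alpha)%R).

Definition Gamma (k : nat) (alpha : rat) (plus : bool)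
  (w1 w2 : seq 'I_k) (x : 'I_k) (g : seq 'I_k) (t : nat -> 'I_k) : Prop :=
  let y := t (size g) in
  L_fin alpha plus (w1 ++ w2 ++ x :: g) /\
  L_inf alpha plus t /\
  occur_inf_letter_zero t x /\
  inf_prefix g t /\
  occur (w2 ++ x :: g ++ [:: y]) (x :: g ++ [:: y]) = 1%N /\
  (occur w1 [:: x] <= occur w2 [:: x])%N.

From mathcomp Require Import all_boot all_order all_algebra.
From mathcomp Require Import zify.
Import Order.TTheory GRing.Theory Num.Theory.
Set Implicit Arguments. Unset Strict Implicit. Unset Printing Implicit Defensive.

(* A forbidden power of the infinite word w1 w2 x t has exponent at least 2,
   hence a period p at most half its length. Factors inside t or inside
   w1 w2 x g are excluded by hypothesis, so the power straddles the last
   occurrence of x, at position P = |w1 w2|. Since x never occurs after P,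
   periodicity forces the power to end before P + p; hence the window x g y
   at P (y the letter of t after g) reappears at P - p. If P - p lies in w2,
   this is a second occurrence of x g y in w2 x g y. Otherwise P - p lies
   in w1, and the p-shift maps every occurrence of x in w2 x injectively to
   an occurrence of x in w1, contradicting occur(w1,x) <= occur(w2,x). *)

Definition periodic_on {T : Type} (f : nat -> T) (m n p : nat) : Prop :=
  forall i, (m <= i)%N -> (i + p < m + n)%N -> f (i + p) = f i.

Lemma nth_flatten_nseq (T : Type) (d : T) (r : seq T) (N i : nat) :
  (i < N * size r)%N -> nth d (flatten (nseq N r)) i = nth d r (i %% size r).
Proof.
elim: N i => [|N IH] i; first by rewrite mul0n.
move=> Hi /=; rewrite nth_cat.
case: ltnP => Hir; first by rewrite modn_small.
rewrite IH; last by rewrite mulSn in Hi; lia.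
by rewrite -{2}(subnK Hir) modnDr.
Qed.

Lemma beta_power_period (T : Type) (d : T) (u : seq T) (beta : rat) :
  is_beta_power u beta -> exists p, [/\ (0 < p)%N,
    ((size u)%:R = beta * p%:R :> rat)%R &
    forall i, (i + p < size u)%N -> nth d u (i + p) = nth d u i].
Proof.
case=> r [r_gt0 _ size_u u_def]; exists (size r); split => // i Hi.
have nth_u j : (j < size u)%N -> nth d u j = nth d r (j %% size r).
  move=> Hj; rewrite u_def nth_take // nth_flatten_nseq //.
  by apply: (leq_trans Hj); rewrite leq_pmulr.
by rewrite !nth_u ?modnDr //; lia.
Qed.

Lemma beta_power_inf_factor_periodic (T : Type) (f : nat -> T) m n (beta : rat) :
  (2 <= beta)%R -> is_beta_power (inf_factor f m n) beta ->
  exists p, [/\ (0 < p)%N, (2 * p <= n)%N & periodic_on f m n p].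
Proof.
move=> beta_ge2 /(beta_power_period (f 0)) [p []].
rewrite size_mkseq => p_gt0 size_n per; exists p; split => //.
  rewrite -(@ler_nat rat) size_n natrM.
  by rewrite ler_wpM2r // ler0n.
move=> i le_mi lt_ipn; have := per (i - m)%N; rewrite !nth_mkseq; try lia.
rewrite addnA (subnKC le_mi); apply; lia.
Qed.

Lemma periodic_letter_bound (T : eqType) (f : nat -> T) (x : T) m n p P j :
  (forall i, (P < i)%N -> f i != x) -> periodic_on f m n p ->
  (m <= j)%N -> (j + p < m + n)%N -> f j = x -> (j + p <= P)%N.
Proof.
move=> after_P per le_mj lt_jpn fj; rewrite leqNgt; apply/negP => /after_P.
by rewrite per // fj eqxx.
Qed.

Lemma infix_mkseq (T : eqType) (f : nat -> T) (u : seq T) n :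
  infix u (mkseq f n) -> exists m, u = mkseq (fun i => f (m + i)) (size u).
Proof.
move/infixP=> [s [s' E]]; exists (size s).
apply: (@eq_from_nth _ (f 0)); first by rewrite size_mkseq.
move=> i Hi; rewrite nth_mkseq //.
have Hs : size (mkseq f n) = (size s + size u + size s')%N.
  by rewrite E !size_cat addnA.
rewrite size_mkseq in Hs.
have := congr1 (fun l => nth (f 0) l (size s + i)) E.
rewrite nth_mkseq; last by lia.
by rewrite nth_cat ltnNge leq_addr /= addKn nth_cat Hi => <-.
Qed.

Lemma L_inf_of_factors (k : nat) (alpha : rat) (plus : bool) (f : nat -> 'I_k) :
  (forall m n beta, is_beta_power (inf_factor f m n) beta ->
     ~~ forbidden_exp alpha plus beta) ->
  L_inf alpha plus f.
Proof.
move=> factors m n u beta /infix_mkseq [m' ->].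
have -> : mkseq (fun i => f (m + (m' + i))) (size u) = inf_factor f (m + m') (size u).
  by apply: eq_mkseq => i; rewrite addnA.
exact: factors.
Qed.

Lemma infix_factor (T : eqType) (d : T) (s : seq T) m n :
  (m + n <= size s)%N -> infix (mkseq (fun i => nth d s (m + i)) n) s.
Proof.
move=> le_mns.
have -> : mkseq (fun i => nth d s (m + i)) n = take n (drop m s).
  apply: (@eq_from_nth _ d).
    by rewrite size_mkseq size_takel // size_drop; lia.
  by move=> i; rewrite size_mkseq => Hi; rewrite nth_mkseq // nth_take // nth_drop.
exact: infix_trans (infix_take _ _) (infix_drop _ _).
Qed.

Lemma inf_prefix_nth (T : Type) (d : T) (g : seq T) (t : nat -> T) i :
  inf_prefix g t -> (i < size g)%N -> nth d g i = t i.
Proof. by move=> g_t Hi; rewrite g_t nth_mkseq. Qed.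

Lemma inf_prefix_ext (T : Type) (g : seq T) (t : nat -> T) :
  inf_prefix g t -> inf_prefix (g ++ [:: t (size g)]) t.
Proof. by rewrite /inf_prefix size_cat addn1 mkseqS cats1 => <-. Qed.

Lemma cat_inf_prefix (T : Type) (d : T) (u p : seq T) (t : nat -> T) i :
  inf_prefix p t -> (i < size u + size p)%N ->
  cat_inf u t i = nth d (u ++ p) i.
Proof.
move=> p_t Hi; rewrite /cat_inf nth_cat; case: ltnP => Hu.
  exact: set_nth_default.
by rewrite (inf_prefix_nth _ p_t) //; lia.
Qed.

Lemma inf_factor_cat_inf_infix (T : eqType) (u p : seq T) (t : nat -> T) m n :
  inf_prefix p t -> (m + n <= size u + size p)%N ->
  infix (inf_factor (cat_inf u t) m n) (u ++ p).
Proof.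
move=> p_t le_mn.
have -> : inf_factor (cat_inf u t) m n =
          mkseq (fun i => nth (t 0) (u ++ p) (m + i)) n.
  apply/eq_in_map => i; rewrite mem_iota => /andP [_ Hi].
  by apply: cat_inf_prefix => //; lia.
by apply: infix_factor; rewrite size_cat.
Qed.

Lemma inf_factor_cat_inf_drop (T : Type) (u : seq T) (t : nat -> T) m n :
  (size u <= m)%N ->
  inf_factor (cat_inf u t) m n = inf_factor t (m - size u) n.
Proof.
move=> le_um; apply: eq_mkseq => i; rewrite /cat_inf ifF; last by lia.
by congr t; lia.
Qed.

Lemma occur1 (T : eqType) (w : seq T) x : occur w [:: x] = count (pred1 x) w.
Proof.
case: w => [|a w] //; set s := a :: w.
rewrite /occur [(_ <= _)%N]/= muln1 subn1 prednK //.
rewrite -[in RHS](mkseq_nth a s) /mkseq count_map.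
apply: eq_in_count => i; rewrite mem_iota => /andP [_ Hi].
by rewrite /= (drop_nth a) //= take0 eqseq_cons andbT.
Qed.

Lemma occur_cat_gt1 (T : eqType) (d : T) (w s : seq T) i :
  (i < size w)%N ->
  (forall j, (j < size s)%N -> nth d (w ++ s) (i + j) = nth d s j) ->
  (1 < occur (w ++ s) s)%N.
Proof.
move=> lt_iw shift; rewrite /occur size_cat leq_addl muln1 addnK -size_filter.
have -> : 2%N = size [:: i; size w] by [].
apply: uniq_leq_size; first by rewrite /= inE andbT neq_ltn lt_iw.
move=> j; rewrite !inE mem_filter mem_iota => /orP [] /eqP ->; last first.
  by rewrite drop_size_cat // take_size eqxx /=.
apply/andP; split; last by rewrite /=; lia.
apply/eqP/(@eq_from_nth _ d) => [|l Hl].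
  by rewrite size_takel // size_drop size_cat; lia.
rewrite size_takel ?size_drop ?size_cat in Hl *; last by lia.
by rewrite nth_take // nth_drop shift.
Qed.

Lemma count_segment (T : Type) (d : T) (a : pred T) (s : seq T) (f : nat -> T) b :
  (forall i, (i < size s)%N -> f (b + i) = nth d s i) ->
  count a s = count (a \o f) (iota b (size s)).
Proof.
move=> f_s; rewrite -[in LHS](mkseq_nth d s) /mkseq count_map.
rewrite -[in RHS](addn0 b) iotaDl count_map.
by apply: eq_in_count => i; rewrite mem_iota /= => /f_s ->.
Qed.

Lemma count_iota_shift_le (a : pred nat) b l c l' p :
  (forall j, (b <= j < b + l)%N -> a j ->
     [/\ (p <= j)%N, (c <= j - p < c + l')%N & a (j - p)]) ->
  (count a (iota b l) <= count a (iota c l'))%N.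
Proof.
move=> shift; rewrite -!size_filter -(size_map (subn^~ p)).
have in_range j : j \in filter a (iota b l) ->
    [/\ (p <= j)%N, (c <= j - p < c + l')%N & a (j - p)].
  by rewrite mem_filter mem_iota => /andP [aj /shift]; apply.
apply: uniq_leq_size.
  rewrite map_inj_in_uniq ?filter_uniq ?iota_uniq //.
  by move=> j1 j2 /in_range [p_j1 _ _] /in_range [p_j2 _ _] /=; lia.
by move=> _ /mapP [j /in_range [_ range aj] ->]; rewrite mem_filter mem_iota aj.
Qed.

Section StraddlingPower.

Variables (T : eqType) (w1 w2 h : seq T) (x : T) (t : nat -> T).
Hypotheses (t_neq_x : forall i, t i != x) (h_prefix : inf_prefix h t).

Local Notation W := (w1 ++ w2 ++ [:: x]).
Local Notation z := (cat_inf W t).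
Local Notation P := (size w1 + size w2)%N.

Let size_W : size W = P.+1.
Proof. by rewrite !size_cat addnA addn1. Qed.

Let z_last_x : z P = x.
Proof.
by rewrite /cat_inf size_W ltnSn (set_nth_default x) ?size_W // nth_cat ltnNge
  leq_addr /= addKn nth_cat ltnn subnn.
Qed.

Let z_neq_x_after i : (P < i)%N -> z i != x.
Proof. by move=> lt_Pi; rewrite /cat_inf size_W ltnNge lt_Pi; apply: t_neq_x. Qed.

Let z_prefix i : (i < P.+1 + size h)%N -> z i = nth x (W ++ h) i.
Proof. by move=> Hi; apply: cat_inf_prefix; rewrite ?size_W. Qed.

Variables (m n p : nat).
Hypotheses (p_gt0 : (0 < p)%N) (p_half : (2 * p <= n)%N)
  (per : periodic_on z m n p)
  (starts_in_W : (m <= P)%N) (ends_after_h : (P.+1 + size h <= m + n)%N).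

Lemma straddling_end_bound : (m + n <= P + p)%N.
Proof.
rewrite leqNgt; apply/negP => lt_Ppn.
have := periodic_letter_bound z_neq_x_after per starts_in_W lt_Ppn z_last_x.
lia.
Qed.

Lemma straddling_shift_in_w2 :
  (size w1 <= P - p)%N ->
  (1 < occur (w2 ++ x :: h) (x :: h))%N.
Proof.
move=> w1_le; have bound := straddling_end_bound.
apply: (@occur_cat_gt1 _ x _ _ (P - p - size w1)); first by lia.
move=> j Hj; rewrite /= in Hj.
have nth_V l : (l < size w2 + (size h).+1)%N ->
    nth x (w2 ++ x :: h) l = z (size w1 + l).
  move=> Hl; rewrite z_prefix; last by lia.
  by rewrite -!catA /= [in RHS]nth_cat ltnNge leq_addr /= addKn.
rewrite nth_V; last by lia.
have -> : (size w1 + (P - p - size w1 + j) = P - p + j)%N by lia.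
rewrite -per; try lia.
have -> : (P - p + j + p = size w1 + (size w2 + j))%N by lia.
by rewrite -nth_V ?nth_cat ?ltnNge ?leq_addr /= ?addKn //; lia.
Qed.

Lemma straddling_shift_in_w1 :
  (P - p < size w1)%N ->
  (occur w2 [:: x] < occur w1 [:: x])%N.
Proof.
move=> lt_w1; have bound := straddling_end_bound.
have count_w1 : count (pred1 x) w1 =
    count (pred1 x \o z) (iota 0 (size w1)).
  apply: (@count_segment _ x) => i Hi; rewrite add0n z_prefix; last by lia.
  by rewrite nth_cat size_cat ifT ?nth_cat ?Hi //; lia.
have count_w2x : count (pred1 x) (w2 ++ [:: x]) =
    count (pred1 x \o z) (iota (size w1) (size w2).+1).
  rewrite -addn1 -(size_cat w2 [:: x]).
  apply: (@count_segment _ x) => i Hi; rewrite z_prefix; last by rewrite size_cat /= in Hi; lia.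
  by rewrite -catA nth_cat ltnNge leq_addr /= addKn nth_cat Hi.
suff : (count (pred1 x) (w2 ++ [:: x]) <= count (pred1 x) w1)%N.
  by rewrite !occur1 count_cat /= eqxx addn0 addn1.
rewrite count_w2x count_w1; apply: (count_iota_shift_le (p := p)) => j /andP [le_j lt_j] /eqP zj.
have le_jp : (m + n <= j + p)%N.
  rewrite leqNgt; apply/negP => lt_jpn.
  have := periodic_letter_bound z_neq_x_after per _ lt_jpn zj; lia.
have shift_j : z (j - p + p) = z (j - p) by apply: per; lia.
split; [lia | lia |]; by rewrite /= -shift_j subnK ?zj //; lia.
Qed.

Lemma straddling_period_absurd :
  occur (w2 ++ x :: h) (x :: h) = 1%N -> (occur w1 [:: x] <= occur w2 [:: x])%N ->
  False.
Proof.
move=> occ1 cnt; have [w1_le|lt_w1] := leqP (size w1) (P - p).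
  by have := straddling_shift_in_w2 w1_le; rewrite occ1.
by have := straddling_shift_in_w1 lt_w1; rewrite ltnNge cnt.
Qed.

End StraddlingPower.

Lemma Upsilon_forbidden_ge2 (k : nat) (alpha beta : rat) (plus : bool) :
  Upsilon k alpha plus -> forbidden_exp alpha plus beta -> (2 <= beta)%R.
Proof.
rewrite /Upsilon /forbidden_exp; case: plus => [[_ alpha_ge2] /ltW|].
  exact: le_trans.
by case=> [[_ /ltW]|[_]] alpha_ge2; apply: le_trans.
Qed.

Theorem mainTheorem3 (k : nat) (alpha : rat) (plus : bool)
  (w1 w2 : seq 'I_k) (x : 'I_k) (g : seq 'I_k) (t : nat -> 'I_k) :
  Upsilon k alpha plus ->
  Gamma alpha plus w1 w2 x g t ->
  L_inf alpha plus (cat_inf (w1 ++ w2 ++ [:: x]) t).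
Proof.
move=> HU [HL [Ht [t_neq_x [g_prefix [occ1 cnt]]]]].
apply: L_inf_of_factors => m n beta pow; apply/negP => forb.
have sizeW : size (w1 ++ w2 ++ [:: x]) = (size w1 + size w2).+1.
  by rewrite !size_cat addnA addn1.
have [in_t|starts_in_W] := leqP (size (w1 ++ w2 ++ [:: x])) m.
  have := Ht (m - size (w1 ++ w2 ++ [:: x])) n _ beta (infix_refl _).
  by rewrite -inf_factor_cat_inf_drop // => /(_ pow); rewrite forb.
have [in_w1w2xg|straddles] := leqP (m + n) (size (w1 ++ w2 ++ [:: x]) + size g).
  have := inf_factor_cat_inf_infix g_prefix in_w1w2xg; rewrite -!catA /=.
  by move/HL/(_ pow); rewrite forb.
have [p [p_gt0 p_half per]] :=
  beta_power_inf_factor_periodic (Upsilon_forbidden_ge2 HU forb) pow.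
apply: (straddling_period_absurd t_neq_x (inf_prefix_ext g_prefix)
          p_gt0 p_half per _ _ occ1 cnt).
  by rewrite sizeW in starts_in_W.
by rewrite size_cat addn1 addnS; rewrite sizeW in straddles.
Qed.
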